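(* Let $A\stackrel{\iota}{\rightarrowtail} G\stackrel{\epsilon}{\twoheadrightarrow} Q$ be a central group extension in which $A$ is finitely generated and $Q$ belongs to $\mathcal{C}$. Then for every prime $p$, $\hat{A}^p\stackrel{\hat{\iota}^p}{\rightarrowtail}\hat{G}^p\stackrel{\hat{\epsilon}^p}{\twoheadrightarrow}\hat{Q}^p$ is a short exact sequence of pro-$p$ groups; equivalently, $\iota(A)$ is topologically $p$-embedded in $G$.
   Context: For a group $G$ and prime $p$, $\hat{G}^p$ denotes the pro-$p$ completion of $G$ and $c_G^p:G\to\hat{G}^p$ the completion map; $\hat{\iota}^p,\hat{\epsilon}^p$ are the induced maps on completions. $\mathbb Z/p$ is regarded as a trivial module for discrete groups and as a trivial discrete topological module for pro-$p$ groups. $\mathcal{C}$ is the class of all groups $G$ such that for every prime $p$ and every integer $n\ge 0$, the map $H^n_{\rm cont}(\hat{G}^p,\mathbb Z/p)\to H^n(G,\mathbb Z/p)$ induced by $c_G^p$ is an isomorphism. A subgroup $H$ of $G$ is topologically $p$-embedded in $G$ if the subspace topology on $H$ induced by the pro-$p$ topology on $G$ equals the pro-$p$ topology of $H$; equivalently, for every normal subgroup $N$ of $H$ of $p$-power index there is a normal subgroup $M$ of $G$ of $p$-power index with $M\cap H\le N$; equivalently, $\hat{H}^p$ embeds in $\hat{G}^p$. *)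

From HB Require Import structures.
From mathcomp Require Import all_boot all_algebra.
Set Implicit Arguments. Unset Strict Implicit. Unset Printing Implicit Defensive.
Import GRing.Theory.
Local Open Scope ring_scope.

Record group := Group {
  gcar :> Type;
  gmul : gcar -> gcar -> gcar;
  gone : gcar;
  ginv : gcar -> gcar;
  gmulA : forall x y z, gmul x (gmul y z) = gmul (gmul x y) z;
  gmul1g : forall x, gmul gone x = x;
  gmulVg : forall x, gmul (ginv x) x = gone }.

Definition is_hom (G H : group) (f : G -> H) :=
  forall x y, f (gmul x y) = gmul (f x) (f y).

Section Subgroups.
Variable G : group.

Definition is_subgroup (H : G -> Prop) :=
  [/\ H (gone G), (forall x y, H x -> H y -> H (gmul x y)) &
      (forall x, H x -> H (ginv x))].

Definition is_normal (N : G -> Prop) :=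
  is_subgroup N /\ forall x g, N x -> N (gmul (ginv g) (gmul x g)).

Definition has_ppower_index (p : nat) (N : G -> Prop) :=
  exists k, exists r : 'I_(p ^ k) -> G,
    forall g, exists! i, N (gmul (ginv (r i)) g).

Definition p_normal (p : nat) (N : G -> Prop) :=
  is_normal N /\ has_ppower_index p N.

Definition fin_gen :=
  exists (k : nat) (s : nat -> G), forall H : G -> Prop, is_subgroup H ->
    (forall i, (i < k)%N -> H (s i)) -> forall x, H x.

End Subgroups.

(* Inhomogeneous cochains with trivial coefficients in a ring R:
   an n-cochain is a function (nat -> T) -> R depending only on the first
   n arguments; [cobound mul n f] is the standard coboundary d f. *)
Section Cochains.
Variables (T : Type) (mul : T -> T -> T) (R : pzRingType).

Definition shift (g : nat -> T) : nat -> T := fun j => g j.+1.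
Definition merge (i : nat) (g : nat -> T) : nat -> T :=
  fun j => if (j < i)%N then g j else if j == i then mul (g j) (g j.+1)
           else g j.+1.

Definition cobound (n : nat) (f : (nat -> T) -> R) : (nat -> T) -> R :=
  fun g => f (shift g) + \sum_(i < n) (-1) ^+ i.+1 * f (merge i g)
           + (-1) ^+ n.+1 * f g.
End Cochains.

Section Discrete.
Variables (G : group) (R : pzRingType).

Definition dcochain (n : nat) (f : (nat -> G) -> R) :=
  forall g g', (forall i, (i < n)%N -> g i = g' i) -> f g = f g'.
Definition dcocycle n (f : (nat -> G) -> R) :=
  dcochain n f /\ forall g, cobound (@gmul G) n f g = 0.
Definition dcoboundary n (f : (nat -> G) -> R) :=
  match n with
  | 0 => forall g, f g = 0
  | n'.+1 => exists h, dcochain n' h /\ forall g, f g = cobound (@gmul G) n' h g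
  end.
End Discrete.

(* Pro-p completion: elements are compatible families (x_N)_N indexed by the
   normal subgroups N of p-power index, x_N representing a coset of N. *)
Section Completion.
Variables (G : group) (p : nat).

Definition fam := (G -> Prop) -> G.

Definition compatible (x : fam) :=
  forall N M, p_normal p N -> p_normal p M -> (forall g, M g -> N g) ->
    N (gmul (ginv (x N)) (x M)).

Definition ceq (N : G -> Prop) (x y : fam) := N (gmul (ginv (x N)) (y N)).

Definition fmul (x y : fam) : fam := fun N => gmul (x N) (y N).

Definition cembed (g : G) : fam := fun _ => g.

Variable R : pzRingType.

(* continuous n-cochain on the pro-p completion (locally constant:
   factors through (G/N)^n for some open normal subgroup) *)
Definition ccochain (n : nat) (f : (nat -> fam) -> R) :=
  exists N, p_normal p N /\
    forall x y, (forall i, compatible (x i)) -> (forall i, compatible (y i)) ->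
      (forall i, (i < n)%N -> ceq N (x i) (y i)) -> f x = f y.
Definition ccocycle n (f : (nat -> fam) -> R) :=
  ccochain n f /\
  forall x, (forall i, compatible (x i)) -> cobound fmul n f x = 0.
Definition ccoboundary n (f : (nat -> fam) -> R) :=
  match n with
  | 0 => forall x, (forall i, compatible (x i)) -> f x = 0
  | n'.+1 => exists h, ccochain n' h /\
      forall x, (forall i, compatible (x i)) -> f x = cobound fmul n' h x
  end.

Definition pullback (f : (nat -> fam) -> R) : (nat -> G) -> R :=
  fun g => f (fun i => cembed (g i)).
End Completion.

(* The class C: for all primes p and n >= 0 the map
   H^n_cont(\hat G^p, Z/p) -> H^n(G, Z/p) is bijective (injective and surjective). *)
Definition in_class_C (Q : group) :=
  forall p, prime p -> forall n : nat,
    (forall f : (nat -> fam Q) -> 'F_p,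
        ccocycle p n f -> dcoboundary n (pullback f) -> ccoboundary p n f) /\
    (forall f : (nat -> Q) -> 'F_p, dcocycle n f ->
        exists f', ccocycle p n f' /\ dcoboundary n (fun g => f g - pullback f' g)).

Definition central_extension (A G Q : group) (iota : A -> G) (eps : G -> Q) :=
  [/\ is_hom iota, is_hom eps, injective iota,
      (forall q, exists g, eps g = q) &
      ((forall g, (exists a, iota a = g) <-> eps g = gone Q) /\
       (forall a g, gmul (iota a) g = gmul g (iota a)))].

Definition top_p_embedded (A G : group) (iota : A -> G) (p : nat) :=
  forall N : A -> Prop, p_normal p N ->
    exists M : G -> Prop, p_normal p M /\ forall a, M (iota a) -> N a.

(* Write A additively; it is abelian since it is central.  Let f be the
   2-cocycle of the extension for a set-theoretic section of eps.  Given a normal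
   subgroup N of A of p-power index, it suffices to find an open normal U in Q
   and a 2-cochain F, constant on U-cosets, with f = F + delta1 h modulo N:
   rechoosing the section by h makes the cocycle vanish modulo N on U x U, and
   the elements of G over U whose A-coordinate lies in N then form a normal
   subgroup M of p-power index with M :&: A <= N.
   The existence of F says that the class of f in H^2(Q, A/N) comes from
   H^2_cont(\hat Q^p, A/N).  As A/N is a finite p-group this follows by
   induction along a chain of subgroups with successive quotients Z/p, each step
   being a five-lemma chase that uses, for coefficients Z/p, surjectivity of
   H^2_cont -> H^2 and injectivity of H^3_cont -> H^3, i.e. that Q is in C. *)

From Pilot Require Import Defs.
From HB Require Import structures.
From mathcomp Require Import all_boot all_algebra all_fingroup cyclic.
From mathcomp Require Import boolp ring.
Set Implicit Arguments. Unset Strict Implicit. Unset Printing Implicit Defensive.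

Section GroupFacts.
Variable G : Defs.group.
Implicit Types x y z : G.
Local Notation "x ** y" := (gmul x y) (at level 40, left associativity).
Local Notation "x ^^-1" := (ginv x) (at level 3).
Local Notation "1" := (gone G).

Lemma gmulgV x : x ** x^^-1 = 1.
Proof.
rewrite -[x ** _]gmul1g -[in LHS](gmulVg x^^-1) -gmulA (gmulA x^^-1 x) gmulVg.
by rewrite gmul1g gmulVg.
Qed.

Lemma gmulg1 x : x ** 1 = x.
Proof. by rewrite -(gmulVg x) gmulA gmulgV gmul1g. Qed.

Lemma gmulKg x y : x^^-1 ** (x ** y) = y.
Proof. by rewrite gmulA gmulVg gmul1g. Qed.

Lemma gmulKVg x y : x ** (x^^-1 ** y) = y.
Proof. by rewrite gmulA gmulgV gmul1g. Qed.

Lemma gmulgK x y : x ** y ** y^^-1 = x.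
Proof. by rewrite -gmulA gmulgV gmulg1. Qed.

Lemma gmulgKV x y : x ** y^^-1 ** y = x.
Proof. by rewrite -gmulA gmulVg gmulg1. Qed.

Lemma gmulgI x y z : x ** y = x ** z -> y = z.
Proof. by move=> eq_xy; rewrite -(gmulKg x y) eq_xy gmulKg. Qed.

Lemma gmulIg x y z : y ** x = z ** x -> y = z.
Proof. by move=> eq_yx; rewrite -(gmulgK y x) eq_yx gmulgK. Qed.

Lemma ginv1 : 1^^-1 = 1.
Proof. by rewrite -[LHS]gmulg1 gmulVg. Qed.

Lemma ginvK x : (x^^-1)^^-1 = x.
Proof. by apply: (@gmulIg x^^-1); rewrite gmulVg gmulgV. Qed.

Lemma ginvM x y : (x ** y)^^-1 = y^^-1 ** x^^-1.
Proof.
apply: (@gmulgI (x ** y)); rewrite gmulgV -gmulA (gmulA y) gmulgV gmul1g.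
by rewrite gmulgV.
Qed.

Lemma ginvMKl x y z : (x ** y)^^-1 ** (x ** z) = y^^-1 ** z.
Proof. by rewrite ginvM -gmulA gmulKg. Qed.

Lemma gmul_eq1 x y : x ** y = 1 -> y = x^^-1.
Proof. by move=> xy1; apply: (@gmulgI x); rewrite xy1 gmulgV. Qed.

Fixpoint gexp x n : G := if n is n'.+1 then x ** gexp x n' else 1.

End GroupFacts.

Section Morphisms.
Variables (G H : Defs.group) (f : G -> H).
Hypothesis f_hom : is_hom f.

Lemma hom1 : f (gone G) = gone H.
Proof. by apply: (@gmulgI _ (f (gone G))); rewrite -f_hom gmul1g gmulg1. Qed.

Lemma homV x : f (ginv x) = ginv (f x).
Proof. by apply: gmul_eq1; rewrite -f_hom gmulgV hom1. Qed.

End Morphisms.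

Section NormalSubgroup.
Variable G : Defs.group.
Implicit Types x y z g : G.
Local Notation "x ** y" := (gmul x y) (at level 40, left associativity).
Local Notation "x ^^-1" := (ginv x) (at level 3).
Variable V : G -> Prop.
Hypothesis V_normal : is_normal V.

Lemma normal1 : V (gone G). Proof. by case: V_normal => -[]. Qed.

Lemma normalM x y : V x -> V y -> V (x ** y).
Proof. by case: V_normal => -[] _ VM _ _; apply: VM. Qed.

Lemma normalV x : V x -> V x^^-1.
Proof. by case: V_normal => -[] _ _ VV _; apply: VV. Qed.

Lemma normalJ x g : V x -> V (g^^-1 ** (x ** g)).
Proof. by case: V_normal => _ VJ; apply: VJ. Qed.

Lemma normalJV x g : V x -> V (g ** (x ** g^^-1)).
Proof. by move=> /(normalJ (g^^-1)); rewrite ginvK. Qed.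

Lemma coset_refl x : V (x^^-1 ** x).
Proof. by rewrite gmulVg; apply: normal1. Qed.

Lemma coset_sym x y : V (x^^-1 ** y) -> V (y^^-1 ** x).
Proof. by move/normalV; rewrite ginvM ginvK. Qed.

Lemma coset_trans x y z : V (x^^-1 ** y) -> V (y^^-1 ** z) -> V (x^^-1 ** z).
Proof. by move=> Vxy Vyz; have := normalM Vxy Vyz; rewrite -gmulA gmulKVg. Qed.

Lemma coset_mulr x y z : V (y^^-1 ** z) -> V ((y ** x)^^-1 ** (z ** x)).
Proof. by move=> Vyz; rewrite ginvM -gmulA (gmulA y^^-1); apply: normalJ. Qed.

Lemma coset_mul x y x' y' : V (x^^-1 ** x') -> V (y^^-1 ** y') ->
  V ((x ** y)^^-1 ** (x' ** y')).
Proof.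
move=> Vx Vy; apply: coset_trans (coset_mulr y Vx) _.
by rewrite ginvMKl.
Qed.

End NormalSubgroup.

Section CosetAction.
Variable G : Defs.group.
Implicit Types x y g : G.
Local Notation "x ** y" := (gmul x y) (at level 40, left associativity).
Local Notation "x ^^-1" := (ginv x) (at level 3).
Variable V : G -> Prop.
Hypothesis V_normal : is_normal V.
Variables (n : nat) (r : 'I_n -> G).
Hypothesis r_transversal : forall g, exists! i, V ((r i)^^-1 ** g).

Let coset_exists g : exists i, V ((r i)^^-1 ** g).
Proof. by case: (r_transversal g) => i [Vi _]; exists i. Qed.

Definition coset_idx g : 'I_n := proj1_sig (cid (coset_exists g)).

Lemma coset_idxP g : V ((r (coset_idx g))^^-1 ** g).
Proof. exact: (proj2_sig (cid (coset_exists g))). Qed.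

Lemma coset_idx_uniq g i : V ((r i)^^-1 ** g) -> i = coset_idx g.
Proof.
move=> Vi; case: (r_transversal g) => j [_ uniq_j].
by rewrite -(uniq_j _ Vi) -(uniq_j _ (coset_idxP g)).
Qed.

Lemma coset_idx_eq g h : V (g^^-1 ** h) <-> coset_idx g = coset_idx h.
Proof.
split=> [Vgh|eq_gh].
  apply: coset_idx_uniq; exact: (coset_trans V_normal (coset_idxP g) Vgh).
apply: (coset_trans V_normal (coset_sym V_normal (coset_idxP g))).
by rewrite eq_gh; apply: coset_idxP.
Qed.

Lemma coset_idx_rep i : coset_idx (r i) = i.
Proof. by symmetry; apply: coset_idx_uniq; apply: coset_refl. Qed.

(* the action on the n cosets of V: a morphism G -> 'S_n with kernel V whose
   image has order n *)
Definition coset_fun x i : 'I_n := coset_idx (x^^-1 ** r i).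

Lemma coset_fun_inj x : injective (coset_fun x).
Proof.
move=> i j /coset_idx_eq Vij.
have /coset_idx_eq : V ((r i)^^-1 ** r j) by move: Vij; rewrite ginvMKl.
by rewrite !coset_idx_rep.
Qed.

Definition coset_perm x : {perm 'I_n} := perm (@coset_fun_inj x).

Lemma coset_permE x i : coset_perm x i = coset_idx (x^^-1 ** r i).
Proof. by rewrite permE. Qed.

Lemma coset_permM x y : coset_perm (x ** y) = (coset_perm x * coset_perm y)%g.
Proof.
apply/permP => i; rewrite permM !coset_permE; apply/coset_idx_eq.
rewrite (ginvM x y) -(gmulA y^^-1) ginvMKl; apply: coset_sym => //.
exact: coset_idxP.
Qed.

Lemma coset_perm1 : coset_perm (gone G) = 1%g.
Proof. by apply/permP => i; rewrite coset_permE perm1 ginv1 gmul1g coset_idx_rep. Qed.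

Lemma coset_perm_ker z : coset_perm z = 1%g -> V z.
Proof.
move=> /(congr1 (fun s : {perm 'I_n} => s (coset_idx (gone G)))).
rewrite coset_permE perm1 => eq_idx.
have V1 := coset_idxP (gone G); rewrite gmulg1 in V1.
have := coset_idxP (z^^-1 ** r (coset_idx (gone G))); rewrite eq_idx => Vz.
set t := r (coset_idx (gone G)) in V1 Vz.
have := normalM V_normal (normalM V_normal (normalV V_normal V1) Vz) V1.
by rewrite ginvK gmulKVg gmulgK => /(normalV V_normal); rewrite ginvK.
Qed.

Lemma coset_perm_eq x y : coset_perm x = coset_perm y <-> V (x^^-1 ** y).
Proof.
split=> [eq_xy|Vxy].
  apply: coset_perm_ker; rewrite coset_permM -eq_xy -coset_permM gmulVg.
  exact: coset_perm1.
apply/permP => i; rewrite !coset_permE; apply/coset_idx_eq.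
rewrite ginvM ginvK -gmulA (gmulA x); apply: normalJ => //.
by have := normalJV V_normal x (normalV V_normal Vxy); rewrite ginvM ginvK gmulgK.
Qed.

Definition coset_perms : {set {perm 'I_n}} := [set coset_perm (r i) | i : 'I_n].

Lemma coset_perms_mem x : coset_perm x \in coset_perms.
Proof.
apply/imsetP; exists (coset_idx x) => //; apply/coset_perm_eq.
by apply: coset_sym => //; apply: coset_idxP.
Qed.

Lemma coset_perms_group_set : group_set coset_perms.
Proof.
apply/group_setP; split; first by rewrite -coset_perm1; apply: coset_perms_mem.
by move=> _ _ /imsetP[i _ ->] /imsetP[j _ ->]; rewrite -coset_permM coset_perms_mem.
Qed.

Canonical coset_perms_group := group coset_perms_group_set.

Lemma card_coset_perms : #|coset_perms| = n.
Proof.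
rewrite card_imset ?card_ord // => i j /coset_perm_eq /coset_idx_eq.
by rewrite !coset_idx_rep.
Qed.

Lemma normal_gexp_index x : V (gexp x n).
Proof.
have pow_perm m : coset_perm (gexp x m) = (coset_perm x ^+ m)%g.
  by elim: m => [|m IHm] /=; rewrite ?coset_perm1 // coset_permM IHm expgS.
have : coset_perm (gexp x n) = coset_perm (gone G).
  have := @order_dvdG _ coset_perms_group _ (coset_perms_mem x).
  by rewrite card_coset_perms order_dvdn pow_perm coset_perm1 => /eqP.
by move/coset_perm_eq; rewrite gmulg1 => /(normalV V_normal); rewrite ginvK.
Qed.

End CosetAction.

Section PNormal.
Variables (G : Defs.group) (p : nat).
Implicit Types x y g : G.
Local Notation "x ** y" := (gmul x y) (at level 40, left associativity).
Local Notation "x ^^-1" := (ginv x) (at level 3).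

Lemma p_normalT : p_normal p (fun _ : G => True).
Proof.
split; first by split; first split.
exists 0%N, (fun _ => gone G) => g; exists (Ordinal (ltn0Sn 0)); split=> // j _.
apply: val_inj => /=; have := ltn_ord j; by move: (j : nat); rewrite expn0; case.
Qed.

(* the cosets of U :&: V are the fibres of x |-> (coset_perm x, coset_perm x),
   whose image is a subgroup of a group of p-power order *)
Lemma p_normalI (U V : G -> Prop) : prime p ->
  p_normal p U -> p_normal p V -> p_normal p (fun x => U x /\ V x).
Proof.
move=> p_pr [nU [kU [rU trU]]] [nV [kV [rV trV]]].
have nUV : is_normal (fun x => U x /\ V x).
  split; first split.
  - by split; apply: normal1.
  - by move=> x y [Ux Vx] [Uy Vy]; split; apply: normalM.
  - by move=> x [Ux Vx]; split; apply: normalV.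
  by move=> x g [Ux Vx]; split; apply: normalJ.
split=> //.
pose Psi x := (coset_perm nU trU x, coset_perm nV trV x).
have Psi_eq x y : Psi x = Psi y <-> U (x^^-1 ** y) /\ V (x^^-1 ** y).
  split=> [[/(coset_perm_eq nU trU) Uxy /(coset_perm_eq nV trV) Vxy] //|[Uxy Vxy]].
  by rewrite /Psi (coset_perm_eq nU trU x y).2 // (coset_perm_eq nV trV x y).2.
pose H := [set z | `[< exists x, Psi x = z >]].
have PsiH x : Psi x \in H by rewrite inE; apply/asboolP; exists x.
have H_group : group_set H.
  apply/group_setP; split.
    by have := PsiH (gone G); rewrite /Psi !coset_perm1.
  move=> a b; rewrite !inE => /asboolP[x <-] /asboolP[y <-].
  by apply/asboolP; exists (x ** y); rewrite /Psi !coset_permM.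
have /(dvdn_pfactor _ _ p_pr)[m _ card_H] : #|H| %| p ^ (kU + kV).
  have sub_H : H \subset setX (coset_perms nU trU) (coset_perms nV trV).
    by apply/subsetP => z; rewrite inE => /asboolP[x <-]; rewrite inE /= !coset_perms_mem.
  have := cardSg (G := setX_group (coset_perms_group nU trU) (coset_perms_group nV trV))
    (H := group H_group) sub_H.
  by rewrite /= cardsX !card_coset_perms expnD.
exists m.
have rep i : exists x, Psi x = enum_val (cast_ord (esym card_H) i).
  by have := enum_valP (cast_ord (esym card_H) i); rewrite inE => /asboolP.
exists (fun i => proj1_sig (cid (rep i))) => g.
exists (cast_ord card_H (enum_rank_in (PsiH (gone G)) (Psi g))); split.
  by apply/Psi_eq; rewrite (proj2_sig (cid (rep _))) cast_ordK enum_rankK_in.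
move=> j /Psi_eq; rewrite (proj2_sig (cid (rep j))) => eq_j.
apply: (@cast_ord_inj _ _ (esym card_H)); rewrite cast_ordK.
by apply: enum_val_inj; rewrite eq_j enum_rankK_in.
Qed.

End PNormal.

Import GRing.Theory.
Local Open Scope ring_scope.

(* [zmod_eq] proves identities in abelian groups: both sides are reified over
   their atoms (identified up to conversion) and the integer coefficient vectors
   are compared by computation. *)
Inductive zterm := ZVar of nat | ZZero | ZAdd of zterm & zterm | ZOpp of zterm.

Fixpoint zeval (V : zmodType) (s : seq V) (t : zterm) : V :=
  match t with
  | ZVar i => s`_i
  | ZZero => 0
  | ZAdd t1 t2 => zeval s t1 + zeval s t2
  | ZOpp t1 => - zeval s t1
  end.

Fixpoint zcoef (t : zterm) (j : nat) : int :=
  match t with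
  | ZVar i => (i == j)%:Z
  | ZZero => 0
  | ZAdd t1 t2 => zcoef t1 j + zcoef t2 j
  | ZOpp t1 => - zcoef t1 j
  end.

Fixpoint zsupp (t : zterm) : nat :=
  match t with
  | ZVar i => i.+1
  | ZZero => 0
  | ZAdd t1 t2 => maxn (zsupp t1) (zsupp t2)
  | ZOpp t1 => zsupp t1
  end.

Lemma zevalE (V : zmodType) (s : seq V) t n : (zsupp t <= n)%N ->
  zeval s t = \sum_(j < n) s`_j *~ zcoef t j.
Proof.
elim: t => [i|_|t1 IH1 t2 IH2|t1 IH1] /=.
- move=> lt_i_n; rewrite (bigD1 (Ordinal lt_i_n)) //= eqxx big1 ?addr0 // => j.
  by rewrite -val_eqE /= eq_sym => /negbTE ->; rewrite mulr0z.
- by rewrite big1 // => j _; rewrite mulr0z.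
- rewrite geq_max => /andP[/IH1 -> /IH2 ->]; rewrite -big_split /=.
  by apply: eq_bigr => j _; rewrite mulrzDr.
- by move/IH1 ->; rewrite -sumrN; apply: eq_bigr => j _; rewrite mulrNz.
Qed.

Definition zterm_eqb (t1 t2 : zterm) : bool :=
  all (fun j => zcoef t1 j == zcoef t2 j) (iota 0 (maxn (zsupp t1) (zsupp t2))).

Lemma zterm_eqbP (V : zmodType) (s : seq V) t1 t2 :
  zterm_eqb t1 t2 -> zeval s t1 = zeval s t2.
Proof.
move=> /allP eq12; set n := maxn (zsupp t1) (zsupp t2).
rewrite !(@zevalE _ _ _ n) ?leq_maxl ?leq_maxr //; apply: eq_bigr => j _.
by rewrite (eqP (eq12 j _)) // mem_iota add0n ltn_ord.
Qed.

Ltac zmod_index t l :=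
  match l with
  | ?a :: _ => let _ := constr:(erefl a : a = t) in constr:(0%N)
  | _ :: ?l' => let n := zmod_index t l' in constr:(n.+1)
  end.

Ltac zmod_atoms l t :=
  lazymatch t with
  | (?a + ?b)%R => let l := zmod_atoms l a in zmod_atoms l b
  | (- ?a)%R => zmod_atoms l a
  | 0%R => l
  | _ => match constr:(tt) with
         | _ => let _ := zmod_index t l in l
         | _ => constr:(t :: l)
         end
  end.

Ltac zmod_reify l t :=
  lazymatch t with
  | (?a + ?b)%R =>
      let ra := zmod_reify l a in let rb := zmod_reify l b in constr:(ZAdd ra rb)
  | (- ?a)%R => let ra := zmod_reify l a in constr:(ZOpp ra)
  | 0%R => constr:(ZZero)
  | _ => let i := zmod_index t l in constr:(ZVar i)
  end.

Ltac zmod_eq :=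
  lazymatch goal with
  | |- @eq ?V ?lhs ?rhs =>
      let l := zmod_atoms (@nil V) lhs in
      let l := zmod_atoms l rhs in
      let r1 := zmod_reify l lhs in
      let r2 := zmod_reify l rhs in
      change (zeval l r1 = zeval l r2); apply: zterm_eqbP; vm_compute; reflexivity
  end.

Section LowDegreeCochains.
Variables (Q : Defs.group) (W : zmodType).
Local Notation "x ** y" := (gmul x y) (at level 40, left associativity).
Implicit Types (x y z w : Q) (h k : Q -> W) (F E : Q -> Q -> W).

Definition delta1 h x y : W := h y - h (x ** y) + h x.
Definition delta2 F x y z : W := F y z - F (x ** y) z + F x (y ** z) - F x y.
Definition delta3 (K : Q -> Q -> Q -> W) x y z w : W :=
  K y z w - K (x ** y) z w + K x (y ** z) w - K x y (z ** w) + K x y z.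

Lemma delta2_delta1 h x y z : delta2 (delta1 h) x y z = 0.
Proof. by rewrite /delta2 /delta1 -!gmulA; zmod_eq. Qed.

Lemma delta3_delta2 F x y z w : delta3 (delta2 F) x y z w = 0.
Proof. by rewrite /delta3 /delta2 -!gmulA; zmod_eq. Qed.

Lemma delta1D h k x y :
  delta1 (fun a => h a + k a) x y = delta1 h x y + delta1 k x y.
Proof. by rewrite /delta1; zmod_eq. Qed.

Lemma delta2D F E x y z :
  delta2 (fun a b => F a b + E a b) x y z = delta2 F x y z + delta2 E x y z.
Proof. by rewrite /delta2; zmod_eq. Qed.

Lemma delta2B F E x y z :
  delta2 (fun a b => F a b - E a b) x y z = delta2 F x y z - delta2 E x y z.
Proof. by rewrite /delta2; zmod_eq. Qed.

Lemma delta2N F x y z : delta2 (fun a b => - F a b) x y z = - delta2 F x y z.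
Proof. by rewrite /delta2; zmod_eq. Qed.

End LowDegreeCochains.

Section CoboundaryExpansion.
Variables (T : Type) (mul : T -> T -> T) (R : comPzRingType).
Implicit Types (f : (nat -> T) -> R) (g : nat -> T).

Lemma cobound1E f g : cobound mul 1 f g = f (shift g) - f (Defs.merge mul 0 g) + f g.
Proof. by rewrite /cobound big_ord_recr big_ord0 /= add0r !exprS expr0; ring. Qed.

Lemma cobound2E f g : cobound mul 2 f g =
  f (shift g) - f (Defs.merge mul 0 g) + f (Defs.merge mul 1 g) - f g.
Proof. by rewrite /cobound !big_ord_recr big_ord0 /= add0r !exprS expr0; ring. Qed.

Lemma cobound3E f g : cobound mul 3 f g =
  f (shift g) - f (Defs.merge mul 0 g) + f (Defs.merge mul 1 g) - f (Defs.merge mul 2 g)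
  + f g.
Proof. by rewrite /cobound !big_ord_recr big_ord0 /= add0r !exprS expr0; ring. Qed.

End CoboundaryExpansion.

Section ClassCLowDegrees.
Variables (Q : Defs.group) (p : nat).
Hypotheses (p_pr : prime p) (Q_in_C : in_class_C Q).
Local Notation "x ** y" := (gmul x y) (at level 40, left associativity).
Local Notation "x ^^-1" := (ginv x) (at level 3).
Local Notation Fp := 'F_p.

Definition coset_const2 (V : Type) (U : Q -> Prop) (f : Q -> Q -> V) :=
  forall x y x' y', U (x^^-1 ** x') -> U (y^^-1 ** y') -> f x y = f x' y'.

Definition coset_const3 (V : Type) (U : Q -> Prop) (f : Q -> Q -> Q -> V) :=
  forall x y z x' y' z', U (x^^-1 ** x') -> U (y^^-1 ** y') -> U (z^^-1 ** z') ->
    f x y z = f x' y' z'.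

Lemma cembed_compatible (g : Q) : compatible p (cembed g).
Proof. by move=> N M [[[N1 _ _] _] _] _ _; rewrite /cembed gmulVg. Qed.

Lemma fmul_compatible (x y : fam Q) :
  compatible p x -> compatible p y -> compatible p (fmul x y).
Proof.
move=> cx cy N M pN pM sMN; have Nx := cx N M pN pM sMN; have Ny := cy N M pN pM sMN.
case: pN => [nN _]; rewrite /fmul.
have -> : (x N ** y N)^^-1 ** (x M ** y M) =
    (y N)^^-1 ** (((x N)^^-1 ** x M) ** y N) ** ((y N)^^-1 ** y M).
  by rewrite ginvM !gmulA gmulgK.
by apply: normalM => //; apply: normalJ.
Qed.

Lemma merge_compatible (x : nat -> fam Q) j : (forall i, compatible p (x i)) ->
  forall i, compatible p (Defs.merge (@fmul Q) j x i).
Proof.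
move=> cx i; rewrite /Defs.merge; case: ifP => _; first exact: cx.
by case: ifP => _; [apply: fmul_compatible|].
Qed.

Lemma ccochain_eq (R : pzRingType) n (f : (nat -> fam Q) -> R) : ccochain p n f ->
  forall x y, (forall i, compatible p (x i)) -> (forall i, compatible p (y i)) ->
  (forall i, (i < n)%N -> x i = y i) -> f x = f y.
Proof.
move=> [N [[[[N1 _ _] _] _] fN]] x y cx cy eq_xy; apply: fN => // i /eq_xy ->.
by rewrite /ceq gmulVg.
Qed.

Definition seq2 (x y : Q) : nat -> Q := fun i => if i == 0%N then x else y.
Definition seq3 (x y z : Q) : nat -> Q :=
  fun i => if i == 0%N then x else if i == 1%N then y else z.

Definition pullback2 (R : pzRingType) (f : (nat -> fam Q) -> R) (x y : Q) : R :=
  pullback f (seq2 x y).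

Lemma ccochain2_coset_const (R : pzRingType) (f : (nat -> fam Q) -> R) :
  ccochain p 2 f -> exists U, p_normal p U /\ coset_const2 U (pullback2 f).
Proof.
move=> [N [pN fN]]; exists N; split=> // x y x' y' Nx Ny.
apply: fN => [i|i|]; try exact: cembed_compatible.
by case=> [|[|i]].
Qed.

Lemma cobound2_cembed (R : comPzRingType) (f : (nat -> fam Q) -> R) x y z :
  ccochain p 2 f ->
  cobound (@fmul Q) 2 f (fun i => cembed (seq3 x y z i)) = delta2 (pullback2 f) x y z.
Proof.
move=> cf; have c3 i : compatible p (cembed (seq3 x y z i)) by apply: cembed_compatible.
rewrite cobound2E /delta2 /pullback2 /pullback.
congr (_ - _ + _ - _); apply: (ccochain_eq cf) => //;
  try (by move=> i; apply: c3); try (by apply: merge_compatible);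
  try (by move=> i; apply: cembed_compatible); by case=> [|[|i]].
Qed.

Lemma cobound2_seq (R : comPzRingType) (phi : Q -> Q -> R) g :
  cobound (@gmul Q) 2 (fun g => phi (g 0%N) (g 1%N)) g =
  delta2 phi (g 0%N) (g 1%N) (g 2%N).
Proof. by rewrite cobound2E. Qed.

(* surjectivity of H^2_cont -> H^2 *)
Lemma cocycle2_coset_const (phi : Q -> Q -> Fp) :
  (forall x y z, delta2 phi x y z = 0) ->
  exists U (mu : Q -> Q -> Fp) (eta : Q -> Fp), [/\ p_normal p U, coset_const2 U mu,
    (forall x y z, delta2 mu x y z = 0) & forall x y, phi x y = mu x y + delta1 eta x y].
Proof.
move=> phi_cocycle.
have dphi : dcocycle 2 (fun g : nat -> Q => phi (g 0%N) (g 1%N)).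
  by split=> [g g' eq_g|g]; rewrite ?eq_g // cobound2_seq phi_cocycle.
have [_ /(_ _ dphi) [f [[cf f_cocycle] [h [ch eq_f]]]]] := Q_in_C p_pr 2.
have [U [pU constU]] := ccochain2_coset_const cf.
exists U, (pullback2 f), (fun a => h (fun _ => a)); split=> // [x y z|x y].
  by rewrite -cobound2_cembed // f_cocycle // => i; apply: cembed_compatible.
suff -> : delta1 (fun a => h (fun _ => a)) x y = phi x y - pullback2 f x y by rewrite addrC subrK.
have := eq_f (seq2 x y); rewrite cobound1E /pullback => ->.
by rewrite /delta1; congr (_ - _ + _); apply: ch; case.
Qed.

(* injectivity of H^3_cont -> H^3 *)
Lemma coset_const_coboundary3 (phi : Q -> Q -> Q -> Fp) U :
  p_normal p U -> coset_const3 U phi -> (forall x y z w, delta3 phi x y z w = 0) ->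
  (exists beta, forall x y z, phi x y z = delta2 beta x y z) ->
  exists U' (kappa : Q -> Q -> Fp), [/\ p_normal p U', coset_const2 U' kappa &
    forall x y z, phi x y z = delta2 kappa x y z].
Proof.
move=> pU constU phi_cocycle [beta phi_beta].
(* phi extends to the completion through the U-components of the families *)
pose f (x : nat -> fam Q) := phi (x 0%N U) (x 1%N U) (x 2%N U).
have cf : ccocycle p 3 f.
  split; first by exists U; split=> // x y _ _ eq_xy; apply: constU; apply: eq_xy.
  by move=> x _; rewrite cobound3E; apply: phi_cocycle.
have df : dcoboundary 3 (pullback f).
  exists (fun g => beta (g 0%N) (g 1%N)); split; first by move=> g g' eq_g; rewrite !eq_g.
  by move=> g; rewrite cobound2_seq /pullback /f /cembed phi_beta.
have [/(_ _ cf df) [k [ck eq_f]] _] := Q_in_C p_pr 3.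
have [U' [pU' constU']] := ccochain2_coset_const ck.
exists U', (pullback2 k); split=> // x y z.
by rewrite -cobound2_cembed // -eq_f // => i; apply: cembed_compatible.
Qed.

End ClassCLowDegrees.

Record zsubgroup (V : zmodType) (X : V -> Prop) := ZSubgroup {
  zsub0 : X 0;
  zsubD : forall u v, X u -> X v -> X (u + v);
  zsubN : forall u, X u -> X (- u) }.

Section ZSubgroupFacts.
Variables (V : zmodType) (X : V -> Prop).
Hypothesis X_sub : zsubgroup X.

Lemma zsubB u v : X u -> X v -> X (u - v).
Proof. by move=> Xu Xv; apply: zsubD => //; apply: zsubN. Qed.

Lemma zsubMn u m : X u -> X (u *+ m).
Proof.
move=> Xu; elim: m => [|m IHm]; first by rewrite mulr0n; apply: zsub0.
by rewrite mulrS; apply: zsubD.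
Qed.

End ZSubgroupFacts.


Section ZSubgroupCochains.
Variables (Q : Defs.group) (V : zmodType) (X : V -> Prop).
Hypothesis X_sub : zsubgroup X.
Local Notation "x ** y" := (gmul x y) (at level 40, left associativity).

Lemma zsub_delta1 (h : Q -> V) x y : (forall a, X (h a)) -> X (delta1 h x y).
Proof.
by move=> Xh; rewrite /delta1; do ![apply: (zsubD X_sub) | apply: (zsubN X_sub) | apply: Xh].
Qed.

Lemma zsub_delta2 (F : Q -> Q -> V) x y z :
  (forall a b, X (F a b)) -> X (delta2 F x y z).
Proof.
by move=> XF; rewrite /delta2; do ![apply: (zsubD X_sub) | apply: (zsubN X_sub) | apply: XF].
Qed.

End ZSubgroupCochains.

(* H^2_cont(\hat Q^p, V/X) -> H^2(Q, V/X) is onto, cochains being taken modulo X *)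
Definition cont_surj2 (Q : Defs.group) (p : nat) (V : zmodType) (X : V -> Prop) :=
  forall f : Q -> Q -> V, (forall x y z, X (delta2 f x y z)) ->
  exists U (F : Q -> Q -> V) (h : Q -> V), [/\ p_normal p U, coset_const2 U F,
    (forall x y z, X (delta2 F x y z)) & forall x y, X (f x y - F x y - delta1 h x y)].

Section CosetConstant.
Variables (Q : Defs.group) (V : zmodType).
Local Notation "x ** y" := (gmul x y) (at level 40, left associativity).

Lemma coset_const_delta2 (U : Q -> Prop) (F : Q -> Q -> V) :
  is_normal U -> coset_const2 U F -> coset_const3 U (delta2 F).
Proof.
move=> nU constF x y z x' y' z' Ux Uy Uz; rewrite /delta2.
have Uxy := coset_mul nU Ux Uy; have Uyz := coset_mul nU Uy Uz.
by rewrite (constF y z y' z') // (constF x y x' y') // (constF (x ** y) z (x' ** y') z')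
  // (constF x (y ** z) x' (y' ** z')).
Qed.

End CosetConstant.

(* If c is not in X but p c is, then Xc := X + Z c contains X with quotient
   Z/p, and [coord] is the resulting coordinate Xc -> F_p. *)
Section Coordinate.
Variables (V : zmodType) (p : nat) (X : V -> Prop) (c : V).
Hypotheses (p_pr : prime p) (X_sub : zsubgroup X).
Hypotheses (c_notin : ~ X c) (pc_in : X (c *+ p)).
Local Notation Fp := 'F_p.

Lemma mulrn_p_mem m : X (c *+ (p * m)).
Proof. by rewrite mulrnA; apply: zsubMn. Qed.

Lemma mulrn_mem_dvdn j : X (c *+ j) -> (p %| j)%N.
Proof.
move=> Xj; apply/negPn/negP => p_ndvd_j.
have [a _] := Bezoutl j (prime_gt0 p_pr).
rewrite (eqP (_ : coprime p j)) ?prime_coprime // => /dvdnP[t ajE].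
apply: c_notin.
have Xaj : X (c *+ (a * j)) by rewrite mulnC mulrnA; apply: zsubMn.
have : X (c *+ (1 + a * j)) by rewrite ajE mulnC; apply: mulrn_p_mem.
by rewrite mulrnDr mulr1n => /zsubB-/(_ X_sub _ Xaj); rewrite addrK.
Qed.

Lemma mulrn_sub_mem i j : X (c *+ i - c *+ j) <-> i = j %[mod p].
Proof.
wlog le_ji : i j / (j <= i)%N.
  move=> wlog_ij; case: (leqP j i) => [/wlog_ij //|/ltnW /wlog_ij eq_ji].
  split=> [/(zsubN X_sub)|ij]; first by rewrite opprB => /eq_ji ->.
  by rewrite -opprB; apply: (zsubN X_sub); apply/eq_ji; rewrite ij.
rewrite -(subnK le_ji) mulrnDr addrK; split.
  by move=> /mulrn_mem_dvdn p_dvd; apply/eqP; rewrite eqn_mod_dvd ?leq_addl // addnK.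
move=> /eqP; rewrite eqn_mod_dvd ?leq_addl // addnK => /dvdnP[m ->].
by rewrite mulnC; apply: mulrn_p_mem.
Qed.

Definition Xc (y : V) := exists i, X (y - c *+ i).

Definition coord (y : V) : Fp :=
  match pselect (Xc y) with left Xcy => (proj1_sig (cid Xcy))%:R | right _ => 0 end.

Lemma coordE y i : X (y - c *+ i) -> coord y = i%:R.
Proof.
move=> Xyi; rewrite /coord; case: pselect => [Xcy|]; last by case; exists i.
case: (cid Xcy) => j Xyj /=; rewrite -Fp_nat_mod // -[RHS]Fp_nat_mod //; congr _%:R.
apply/mulrn_sub_mem.
by have := zsubB X_sub Xyi Xyj; rewrite opprB addrC addrA subrK.
Qed.

Lemma Xc_mem y : X y -> Xc y.
Proof. by exists 0%N; rewrite mulr0n subr0. Qed.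

Lemma coord_mem y : X y -> coord y = 0.
Proof. by move=> Xy; rewrite (@coordE _ 0) ?mulr0n ?subr0. Qed.

Lemma Xc_zsubgroup : zsubgroup Xc.
Proof.
split; first by apply: Xc_mem; apply: zsub0.
  move=> u v [i Xu] [j Xv]; exists (i + j)%N.
  by have := zsubD X_sub Xu Xv; rewrite mulrnDr opprD addrACA.
move=> u [i Xu]; exists (i * p.-1)%N.
suff -> : - u - c *+ (i * p.-1)%N = - (u - c *+ i) - c *+ (p * i)%N.
  exact: (zsubB X_sub (zsubN X_sub Xu) (mulrn_p_mem i)).
have -> : (p * i = i * p.-1 + i)%N.
  by rewrite mulnC -{1}(prednK (prime_gt0 p_pr)) mulnS addnC.
by rewrite mulrnDr; zmod_eq.
Qed.

Lemma coordD u v : Xc u -> Xc v -> coord (u + v) = coord u + coord v.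
Proof.
move=> [i Xu] [j Xv]; rewrite (coordE Xu) (coordE Xv) -natrD; apply: coordE.
by have := zsubD X_sub Xu Xv; rewrite mulrnDr opprD addrACA.
Qed.

Lemma coordN u : Xc u -> coord (- u) = - coord u.
Proof.
move=> Xcu; apply/eqP; rewrite -subr_eq0 opprK addrC -coordD //.
  by rewrite subrr coord_mem //; apply: zsub0.
exact: zsubN Xc_zsubgroup _ _.
Qed.

Lemma coordB u v : Xc u -> Xc v -> coord (u - v) = coord u - coord v.
Proof. by move=> Xcu Xcv; rewrite coordD ?coordN //; apply: zsubN Xc_zsubgroup _ _. Qed.

Lemma coord_eq0 y : Xc y -> coord y = 0 -> X y.
Proof.
move=> [i Xyi]; rewrite (coordE Xyi) => /(congr1 val); rewrite /= (val_Fp_nat p_pr).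
move=> i_mod; have : X (c *+ i - c *+ 0) by apply/mulrn_sub_mem; rewrite i_mod mod0n.
by move=> /(zsubD X_sub Xyi); rewrite mulr0n subr0 subrK.
Qed.

Definition cvec (t : Fp) : V := c *+ t.

Lemma Xc_cvec t : Xc (cvec t).
Proof. by exists (t : nat); rewrite subrr; apply: zsub0. Qed.

Lemma coord_cvec t : coord (cvec t) = t.
Proof. by rewrite (@coordE _ t) ?natr_Zp // subrr; apply: zsub0. Qed.


Section LiftStep.
Variable Q : Defs.group.
Hypothesis Q_in_C : in_class_C Q.
Implicit Types x y z w : Q.

Let Xc_sub := Xc_zsubgroup.

Lemma coord_delta1 (h : Q -> V) x y :
  (forall a, Xc (h a)) -> coord (delta1 h x y) = delta1 (fun a => coord (h a)) x y.
Proof.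
move=> Xch; rewrite /delta1 coordD ?coordB //; last exact: (zsubB Xc_sub).
Qed.

Lemma coord_delta2 (F : Q -> Q -> V) x y z :
  (forall a b, Xc (F a b)) -> coord (delta2 F x y z) = delta2 (fun a b => coord (F a b)) x y z.
Proof.
move=> XcF.
rewrite /delta2 coordB ?coordD ?coordN //.
all: by do ![apply: (zsubN Xc_sub) | apply: (zsubD Xc_sub) | apply: XcF].
Qed.

Lemma coord_delta3 (K : Q -> Q -> Q -> V) x y z w :
  (forall a b d, Xc (K a b d)) ->
  coord (delta3 K x y z w) = delta3 (fun a b d => coord (K a b d)) x y z w.
Proof.
move=> XcK.
rewrite /delta3 coordD ?coordD ?coordN //.
all: by do ![apply: (zsubN Xc_sub) | apply: (zsubD Xc_sub) | apply: XcK].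
Qed.

Lemma coord_delta1_cvec (eta : Q -> 'F_p) x y :
  coord (delta1 (fun a => cvec (eta a)) x y) = delta1 eta x y.
Proof. by rewrite coord_delta1 => [|a]; [rewrite /delta1 !coord_cvec | apply: Xc_cvec]. Qed.

Lemma coord_delta2_cvec (kappa : Q -> Q -> 'F_p) x y z :
  coord (delta2 (fun a b => cvec (kappa a b)) x y z) = delta2 kappa x y z.
Proof. by rewrite coord_delta2 => [|a b]; [rewrite /delta2 !coord_cvec | apply: Xc_cvec]. Qed.

Section Correction.
Variable f : Q -> Q -> V.
Hypothesis f_cocycle : forall x y z, X (delta2 f x y z).

(* the obstruction coord (delta2 F1) is a coboundary mod Xc, hence of a
   coset-constant cochain kappa, which corrects F1 to a cocycle mod X *)
Lemma cocycle_correction U1 (F1 : Q -> Q -> V) (h1 : Q -> V) :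
  p_normal p U1 -> coset_const2 U1 F1 -> (forall x y z, Xc (delta2 F1 x y z)) ->
  (forall x y, Xc (f x y - F1 x y - delta1 h1 x y)) ->
  exists U2 (kappa : Q -> Q -> 'F_p), [/\ p_normal p U2, coset_const2 U2 kappa &
    forall x y z, X (delta2 (fun a b => F1 a b - cvec (kappa a b)) x y z)].
Proof.
move=> pU1 constF1 XcF1 Xcf.
pose phi x y z := coord (delta2 F1 x y z).
have const_phi : coset_const3 U1 phi.
  case: pU1 => nU1 _ x y z x' y' z' Ux Uy Uz.
  by rewrite /phi (coset_const_delta2 nU1 constF1 Ux Uy Uz).
have phi_cocycle x y z w : delta3 phi x y z w = 0.
  by rewrite -coord_delta3 // delta3_delta2 coord_mem //; apply: zsub0.
have phi_coboundary : exists beta, forall x y z, phi x y z = delta2 beta x y z.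
  exists (fun x y => - coord (f x y - F1 x y - delta1 h1 x y)) => x y z.
  rewrite delta2N -coord_delta2 // !delta2B delta2_delta1 subr0.
  by rewrite coordB ?(coord_mem (f_cocycle x y z)) ?sub0r ?opprK //; apply: Xc_mem.
have [U2 [kappa [pU2 const_kappa phi_kappa]]] :=
  coset_const_coboundary3 p_pr Q_in_C pU1 const_phi phi_cocycle phi_coboundary.
exists U2, kappa; split=> // x y z; rewrite delta2B.
have Xc_cvec2 : Xc (delta2 (fun a b => cvec (kappa a b)) x y z).
  by apply: zsub_delta2 => // a b; apply: Xc_cvec.
apply: coord_eq0; first exact: (zsubB Xc_sub).
by rewrite coordB // coord_delta2_cvec -phi_kappa subrr.
Qed.

(* F2 is now a cocycle mod X; the remaining cocycle coord (f - F2 - delta1 h1)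
   with values in F_p is cohomologous to a coset-constant one *)
Lemma coboundary_correction (F2 : Q -> Q -> V) (h1 : Q -> V) :
  (forall x y z, X (delta2 F2 x y z)) ->
  (forall x y, Xc (f x y - F2 x y - delta1 h1 x y)) ->
  exists U3 (mu : Q -> Q -> 'F_p) (eta : Q -> 'F_p), [/\ p_normal p U3, coset_const2 U3 mu,
    forall x y z, X (delta2 (fun a b => F2 a b + cvec (mu a b)) x y z) &
    forall x y, X (f x y - (F2 x y + cvec (mu x y)) - delta1 (fun a => h1 a + cvec (eta a)) x y)].
Proof.
move=> XF2 XcG.
pose phi x y := coord (f x y - F2 x y - delta1 h1 x y).
have phi_cocycle x y z : delta2 phi x y z = 0.
  rewrite -coord_delta2 // !delta2B delta2_delta1 subr0.
  by rewrite coordB ?coord_mem ?subrr //; apply: Xc_mem.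
have [U3 [mu [eta [pU3 const_mu mu_cocycle phi_mu]]]] :=
  cocycle2_coset_const p_pr Q_in_C phi_cocycle.
have Xc_cvec2 x y z : Xc (delta2 (fun a b => cvec (mu a b)) x y z).
  by apply: zsub_delta2 => // a b; apply: Xc_cvec.
have Xc_cvec1 x y : Xc (delta1 (fun a => cvec (eta a)) x y).
  by apply: zsub_delta1 => // a; apply: Xc_cvec.
exists U3, mu, eta; split=> // [x y z|x y].
  rewrite delta2D; apply: zsubD => //; apply: coord_eq0 => //.
  by rewrite coord_delta2_cvec mu_cocycle.
rewrite delta1D; set G := f x y - F2 x y - delta1 h1 x y.
have -> : f x y - (F2 x y + cvec (mu x y)) -
    (delta1 h1 x y + delta1 (fun a => cvec (eta a)) x y) =
    G - cvec (mu x y) - delta1 (fun a => cvec (eta a)) x y by rewrite /G; zmod_eq.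
have XcGmu : Xc (G - cvec (mu x y)) by apply: (zsubB Xc_sub); [apply: XcG | apply: Xc_cvec].
apply: coord_eq0; first exact: (zsubB Xc_sub).
rewrite coordB // coordB ?coord_cvec ?coord_delta1_cvec; [|exact: XcG|exact: Xc_cvec].
by have -> : coord G = phi x y by []; rewrite phi_mu; zmod_eq.
Qed.

End Correction.

Lemma cont_surj2_step : cont_surj2 Q p Xc -> cont_surj2 Q p X.
Proof.
move=> surjXc f f_cocycle.
have [U1 [F1 [h1 [pU1 constF1 XcF1 Xcf]]]] := surjXc f (fun x y z => Xc_mem (f_cocycle x y z)).
have [U2 [kappa [pU2 const_kappa XF2]]] := cocycle_correction f_cocycle pU1 constF1 XcF1 Xcf.
pose F2 x y := F1 x y - cvec (kappa x y).
have XcG2 x y : Xc (f x y - F2 x y - delta1 h1 x y).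
  suff -> : f x y - F2 x y - delta1 h1 x y =
      f x y - F1 x y - delta1 h1 x y + cvec (kappa x y).
    by apply: (zsubD Xc_sub) => //; apply: Xc_cvec.
  by rewrite /F2; zmod_eq.
have [U3 [mu [eta [pU3 const_mu XF XfF]]]] := coboundary_correction f_cocycle XF2 XcG2.
exists (fun x => (U1 x /\ U2 x) /\ U3 x), (fun x y => F2 x y + cvec (mu x y)),
  (fun x => h1 x + cvec (eta x)).
split=> //; first by apply: p_normalI => //; apply: p_normalI.
move=> x y x' y' [[U1x U2x] U3x] [[U1y U2y] U3y].
by rewrite /F2 (constF1 x y x' y') // (const_kappa x y x' y') // (const_mu x y x' y').
Qed.

End LiftStep.

End Coordinate.

Section AbelianCoefficients.
Variables (Q : Defs.group) (p : nat) (A : Defs.group).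
Hypotheses (p_pr : prime p) (Q_in_C : in_class_C Q).
Hypothesis A_comm : forall x y : A, gmul x y = gmul y x.

Definition Ab : Type := gcar A.
HB.instance Definition _ := gen_eqMixin Ab.
HB.instance Definition _ := gen_choiceMixin Ab.

Let Ab_addA : associative (fun x y : Ab => gmul x y).
Proof. by move=> x y z; apply: gmulA. Qed.
Let Ab_addC : commutative (fun x y : Ab => gmul x y).
Proof. exact: A_comm. Qed.
Let Ab_add0 : left_id (gone A : Ab) (fun x y : Ab => gmul x y).
Proof. exact: gmul1g. Qed.
Let Ab_addN : left_inverse (gone A : Ab) (@ginv A : Ab -> Ab) (fun x y : Ab => gmul x y).
Proof. exact: gmulVg. Qed.
HB.instance Definition _ := GRing.isZmodule.Build Ab Ab_addA Ab_addC Ab_add0 Ab_addN.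

Lemma gexpE (a : Ab) m : gexp a m = a *+ m.
Proof. by elim: m => [|m IHm] //=; rewrite mulrS IHm. Qed.

Lemma zsubgroupP (X : Ab -> Prop) : is_subgroup (X : A -> Prop) -> zsubgroup X.
Proof. by case. Qed.

Section Induction.
Variable N : Ab -> Prop.
Hypothesis N_normal : is_normal (N : A -> Prop).
Variables (k : nat) (r : 'I_(p ^ k) -> Ab).
Hypothesis r_transversal : forall a : Ab, exists! i, N (- r i + a).
Variable X : Ab -> Prop.
Hypotheses (X_sub : zsubgroup X) (sub_NX : forall a, N a -> X a).

Lemma exists_order_p_mod a : ~ X a -> exists c, ~ X c /\ X (c *+ p).
Proof.
move=> Xa_n.
have Xpk : X (a *+ p ^ k).
  by apply: sub_NX; rewrite -gexpE; apply: (normal_gexp_index N_normal r_transversal).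
have exP : exists j, `[< X (a *+ p ^ j) >] by exists k; apply/asboolP.
case: (ex_minnP exP) => j /asboolP Xj min_j.
have j_gt0 : (0 < j)%N by case: j Xj {min_j} => // /[!expn0] /[!mulr1n].
exists (a *+ p ^ j.-1); split.
  by move=> /asboolP /min_j; rewrite -ltnS prednK // ltnn.
by rewrite -mulrnA -expnSr prednK.
Qed.

Let outside (Y : Ab -> Prop) := [set i | ~~ `[< Y (r i) >]].

Lemma card_outside_Xc c : ~ X c -> X (c *+ p) ->
  (#|outside (Xc X c)| < #|outside X|)%N.
Proof.
move=> Xc_n Xpc; apply: proper_card; apply/properP; split.
  apply/subsetP => i; rewrite !inE => /asboolPn Xci; apply/asboolPn => Xi.
  by apply: Xci; apply: Xc_mem.
have Nc := coset_idxP r_transversal c.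
set i := coset_idx r_transversal c in Nc; exists i; rewrite !inE.
  apply/asboolPn => Xi; apply: Xc_n.
  by have := zsubD X_sub Xi (sub_NX Nc); rewrite addNKr.
rewrite negbK; apply/asboolP; exists 1%N; rewrite mulr1n.
by have := zsubN X_sub (sub_NX Nc); rewrite opprD opprK.
Qed.

End Induction.

(* induction on the number of cosets of N outside X, passing from X to X + Z c
   with c of order p modulo X *)
Lemma cont_surj2_p_normal (N : Ab -> Prop) : p_normal p (N : A -> Prop) ->
  forall X, zsubgroup X -> (forall a, N a -> X a) -> cont_surj2 Q p X.
Proof.
move=> [N_normal [k [r r_transversal]]].
pose outside (Y : Ab -> Prop) := [set i | ~~ `[< Y (r i) >]].
suff IH m X : #|outside X| = m -> zsubgroup X -> (forall a, N a -> X a) ->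
  cont_surj2 Q p X by move=> X; apply: IH.
elim/ltn_ind: m X => m IHm X card_X X_sub sub_NX.
have [X_full|/existsNP[a Xa_n]] := pselect (forall a, X a).
  move=> f _; exists (fun _ => True), (fun _ _ => 0), (fun _ => 0).
  by split=> //; apply: p_normalT.
have [c [Xc_n Xpc]] := exists_order_p_mod N_normal r_transversal sub_NX Xa_n.
apply: (cont_surj2_step p_pr X_sub Xc_n Xpc Q_in_C).
apply: (IHm _ _ _ erefl (Xc_zsubgroup p_pr X_sub Xpc)) => [|b /sub_NX]; last exact: Xc_mem.
by rewrite -card_X; apply: (card_outside_Xc r_transversal X_sub sub_NX).
Qed.

Section CentralExtension.
Variables (G : Defs.group) (iota : A -> G) (eps : G -> Q).
Local Notation "x ** y" := (gmul x y) (at level 40, left associativity).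
Local Notation "1g" := (gone G).
Local Notation "1q" := (gone Q).
Hypotheses (iota_hom : is_hom iota) (eps_hom : is_hom eps) (iota_inj : injective iota).
Hypothesis eps_surj : forall q, exists g, eps g = q.
Hypothesis ker_eps : forall g, (exists a, iota a = g) <-> eps g = 1q.
Hypothesis iota_central : forall a g, iota a ** g = g ** iota a.

Lemma iotaD (a b : Ab) : iota (a + b) = iota a ** iota b.
Proof. exact: iota_hom. Qed.

Lemma iota0 : iota (0 : Ab) = 1g.
Proof. exact: hom1. Qed.

Lemma eps_iota a : eps (iota a) = 1q.
Proof. by apply/ker_eps; exists a. Qed.

Lemma iota_mulA (a b : Ab) g : iota a ** (iota b ** g) = iota (a + b) ** g.
Proof. by rewrite iotaD gmulA. Qed.

Lemma iota_mulC (a b : Ab) g k : iota a ** g ** (iota b ** k) = iota (a + b) ** (g ** k).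
Proof. by rewrite -gmulA (gmulA g) -iota_central -gmulA iota_mulA. Qed.

Definition iota_inv (g : G) : Ab :=
  match pselect (exists a, iota a = g) with left ex_a => proj1_sig (cid ex_a) | _ => 0 end.

Lemma iota_invK g : eps g = 1q -> iota (iota_inv g) = g.
Proof.
by move=> /ker_eps ex_a; rewrite /iota_inv; case: pselect => // ex_a'; case: cid.
Qed.

Definition sec (q : Q) : G := proj1_sig (cid (eps_surj q)).

Lemma eps_sec q : eps (sec q) = q.
Proof. exact: (proj2_sig (cid (eps_surj q))). Qed.

Definition ext_cocycle (x y : Q) : Ab := iota_inv (sec x ** sec y ** ginv (sec (x ** y))).

Lemma ext_cocycleE x y : iota (ext_cocycle x y) ** sec (x ** y) = sec x ** sec y.
Proof.
rewrite /ext_cocycle iota_invK ?gmulgKV //.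
by rewrite !eps_hom (homV eps_hom) !eps_sec gmulgV.
Qed.

Lemma delta2_ext_cocycle x y z : delta2 ext_cocycle x y z = 0.
Proof.
have assoc : ext_cocycle x y + ext_cocycle (x ** y) z =
    ext_cocycle y z + ext_cocycle x (y ** z).
  apply: iota_inj; apply: (@gmulIg _ (sec (x ** y ** z))).
  have -> : iota (ext_cocycle x y + ext_cocycle (x ** y) z) ** sec (x ** y ** z) =
      sec x ** sec y ** sec z by rewrite iotaD -gmulA ext_cocycleE gmulA ext_cocycleE.
  rewrite -(gmulA x); symmetry.
  rewrite iotaD -gmulA (ext_cocycleE x (y ** z)) gmulA iota_central.
  by rewrite -gmulA ext_cocycleE gmulA.
have -> : delta2 ext_cocycle x y z = ext_cocycle y z + ext_cocycle x (y ** z) -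
    (ext_cocycle x y + ext_cocycle (x ** y) z) by rewrite /delta2; zmod_eq.
by rewrite assoc subrr.
Qed.

(* Given f = F + delta1 h mod N with F constant on U-cosets, rechoose the
   section as [tsec]; every g is uniquely iota (acoord g) ** tsec (eps g), and
   the cocycle [tcocycle] of tsec lies in N on U x U.  The open subgroup is the
   preimage of U x N in these coordinates. *)
Section OpenSubgroup.
Variable N : Ab -> Prop.
Hypothesis pN : p_normal p (N : A -> Prop).
Variables (U : Q -> Prop) (F : Q -> Q -> Ab) (h : Q -> Ab).
Hypotheses (pU : p_normal p U) (constF : coset_const2 U F).
Hypothesis F_cocycle : forall x y z, N (delta2 F x y z).
Hypothesis F_cohom : forall x y, N (ext_cocycle x y - F x y - delta1 h x y).

Let N_sub : zsubgroup N. Proof. by case: pN => [[/zsubgroupP]]. Qed.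
Let U_normal : is_normal U. Proof. by case: pU. Qed.
Let U1 : U 1q. Proof. exact: normal1 U_normal. Qed.

Definition tsec (q : Q) : G := iota (- h q - F 1q 1q) ** sec q.
Definition tcocycle (x y : Q) : Ab := ext_cocycle x y - delta1 h x y - F 1q 1q.
Definition acoord (g : G) : Ab := iota_inv (g ** ginv (tsec (eps g))).

Lemma eps_tsec q : eps (tsec q) = q.
Proof. by rewrite /tsec eps_hom eps_iota eps_sec gmul1g. Qed.

Lemma mul_iota_tsec (a b : Ab) x y :
  iota a ** tsec x ** (iota b ** tsec y) = iota (a + b + tcocycle x y) ** tsec (x ** y).
Proof.
rewrite /tsec !iota_mulA iota_mulC -ext_cocycleE !iota_mulA.
by congr (iota _ ** _); rewrite /tcocycle /delta1; zmod_eq.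
Qed.

Lemma acoordK g : iota (acoord g) ** tsec (eps g) = g.
Proof.
by rewrite /acoord iota_invK ?gmulgKV // eps_hom (homV eps_hom) eps_tsec gmulgV.
Qed.

Lemma eps_iota_tsec a q : eps (iota a ** tsec q) = q.
Proof. by rewrite eps_hom eps_iota eps_tsec gmul1g. Qed.

Lemma acoord_iota_tsec a q : acoord (iota a ** tsec q) = a.
Proof.
apply: iota_inj; apply: (@gmulIg _ (tsec q)).
by rewrite -{2}(eps_iota_tsec a q) acoordK.
Qed.

Lemma tsec1 : tsec 1q = iota (tcocycle 1q 1q).
Proof.
apply: (@gmulIg _ (tsec 1q)).
by have := mul_iota_tsec 0 0 1q 1q; rewrite !iota0 !gmul1g !add0r.
Qed.

Lemma acoordM g k : acoord (g ** k) = acoord g + acoord k + tcocycle (eps g) (eps k).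
Proof. by rewrite -{1}(acoordK g) -{1}(acoordK k) mul_iota_tsec acoord_iota_tsec. Qed.

Lemma acoord1 : acoord 1g = - tcocycle 1q 1q.
Proof.
rewrite -[1g]iota0 -(addNr (tcocycle 1q 1q)) iotaD -tsec1.
exact: acoord_iota_tsec.
Qed.

Lemma acoordV g : acoord (ginv g) = - tcocycle 1q 1q - acoord g - tcocycle (eps (ginv g)) (eps g).
Proof. by have := acoordM (ginv g) g; rewrite gmulVg acoord1 => ->; zmod_eq. Qed.

Lemma tcocycle_mod x y : N (tcocycle x y - (F x y - F 1q 1q)).
Proof. by have := F_cohom x y; congr N; rewrite /tcocycle; zmod_eq. Qed.

Lemma tcocycle_mem x y : U x -> U y -> N (tcocycle x y).
Proof.
move=> Ux Uy; have := tcocycle_mod x y.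
have -> : F x y = F 1q 1q by apply: constF; rewrite gmulg1; apply: normalV.
by rewrite subrr subr0.
Qed.

Definition open_lift (g : G) := U (eps g) /\ N (acoord g).

Lemma open_lift_subgroup : is_subgroup open_lift.
Proof.
split.
- split; first by rewrite (hom1 eps_hom).
  by rewrite acoord1; apply: (zsubN N_sub); apply: tcocycle_mem.
- move=> g k [Ug Ng] [Uk Nk]; split; first by rewrite eps_hom; apply: normalM.
  by rewrite acoordM; do ?[apply: tcocycle_mem | apply: (zsubD N_sub)].
- move=> g [Ug Ng]; have Ugi : U (eps (ginv g)) by rewrite (homV eps_hom); apply: normalV.
  split=> //; rewrite acoordV.
  by do ?[apply: tcocycle_mem | apply: (zsubB N_sub) | apply: (zsubN N_sub)].
Qed.

Lemma open_lift_conj g x : open_lift g -> open_lift (ginv x ** (g ** x)).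
Proof.
move=> [Ug Ng]; split; first by rewrite !eps_hom (homV eps_hom); apply: normalJ.
rewrite !acoordM acoordV eps_hom (homV eps_hom).
set u := eps g; set q := eps x.
have F_u : F u q = F 1q q.
  by apply: constF; [rewrite gmulg1; apply: (normalV U_normal) | apply: (coset_refl U_normal)].
have F_uq : F (ginv q) (u ** q) = F (ginv q) q.
  apply: constF; first exact: (coset_refl U_normal).
  by rewrite ginvM -gmulA; apply: (normalJ U_normal); apply: (normalV U_normal).
have N11 := tcocycle_mod 1q 1q; have Nq := tcocycle_mod (ginv q) q.
have Nuq := tcocycle_mod u q; have Nquq := tcocycle_mod (ginv q) (u ** q).
rewrite F_u in Nuq; rewrite F_uq in Nquq.
have NF1 : N (F 1q q - F 1q 1q).
  by have := F_cocycle 1q 1q q; rewrite /delta2 !gmul1g subrr add0r.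
set c0 := F 1q 1q in N11 Nq Nuq Nquq NF1 *.
set e := tcocycle in N11 Nq Nuq Nquq *.
have -> : - e 1q 1q - acoord x - e (ginv q) q + (acoord g + acoord x + e u q)
    + e (ginv q) (u ** q) =
    acoord g - (e 1q 1q - (c0 - c0)) - (e (ginv q) q - (F (ginv q) q - c0))
    + (e u q - (F 1q q - c0)) + (e (ginv q) (u ** q) - (F (ginv q) q - c0))
    + (F 1q q - c0) by zmod_eq.
by do ?[assumption | apply: (zsubN N_sub) | apply: (zsubD N_sub)].
Qed.

Lemma open_lift_normal : is_normal open_lift.
Proof. by split; [apply: open_lift_subgroup | move=> g x; apply: open_lift_conj]. Qed.

Lemma open_lift_index : has_ppower_index p open_lift.
Proof.
case: pU => _ [kU [rU trU]]; case: pN => _ [kA [rA trA]].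
pose R (i : 'I_(p ^ kU)) (b : 'I_(p ^ kA)) := iota (rA b) ** tsec (rU i).
pose z i g := - tcocycle 1q 1q - tcocycle (ginv (rU i)) (rU i) + acoord g
  + tcocycle (ginv (rU i)) (eps g).
have R_coset g i b : open_lift (ginv (R i b) ** g) <->
    U (ginv (rU i) ** eps g) /\ N (- (rA b : Ab) + z i g).
  rewrite /open_lift acoordM acoordV /R (homV eps_hom) eps_iota_tsec.
  rewrite acoord_iota_tsec eps_hom (homV eps_hom) eps_iota_tsec.
  by rewrite [X in N X](_ : _ = - (rA b : Ab) + z i g) // /z; zmod_eq.
pose T := ('I_(p ^ kU) * 'I_(p ^ kA))%type.
have card_T : (p ^ (kU + kA))%N = #|{: T}| by rewrite card_prod !card_ord expnD.
exists (kU + kA), (fun j => let ib := enum_val (cast_ord card_T j) in R ib.1 ib.2) => g.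
pose i0 := coset_idx trU (eps g); pose b0 := coset_idx trA (z i0 g).
exists (cast_ord (esym card_T) (enum_rank (i0, b0))); split.
  rewrite /= cast_ordKV enum_rankK; apply/R_coset.
  by split; [apply: (coset_idxP trU) | apply: (coset_idxP trA)].
move=> j /=; set ib := enum_val _ => /R_coset [Ui Nb].
apply: (@cast_ord_inj _ _ card_T); rewrite cast_ordKV; apply: enum_val_inj.
have eq_i : ib.1 = i0 by apply: (coset_idx_uniq trU).
have eq_b : ib.2 = b0 by apply: (coset_idx_uniq trA); rewrite -eq_i.
by rewrite enum_rankK -/ib -eq_i -eq_b; case: (ib).
Qed.

Lemma open_lift_iota (a : Ab) : open_lift (iota a) -> N a.
Proof.
case=> _; have -> : iota a = iota (a - tcocycle 1q 1q) ** tsec 1q.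
  by rewrite tsec1 -iotaD subrK.
rewrite acoord_iota_tsec => Na; have := zsubD N_sub Na (tcocycle_mem U1 U1).
by rewrite subrK.
Qed.

End OpenSubgroup.

Lemma central_top_p_embedded (N : Ab -> Prop) : p_normal p (N : A -> Prop) ->
  exists M : G -> Prop, p_normal p M /\ forall a, M (iota a) -> N a.
Proof.
move=> pN; have N_sub : zsubgroup N by case: pN => [[/zsubgroupP]].
have ext_cocycle_mod x y z : N (delta2 ext_cocycle x y z).
  by rewrite delta2_ext_cocycle; apply: zsub0.
have [U [F [h [pU constF F_cocycle F_cohom]]]] :=
  cont_surj2_p_normal pN N_sub (fun a Na => Na) ext_cocycle_mod.
exists (open_lift N U F h); split; first split.
- exact: (open_lift_normal pN pU constF F_cocycle F_cohom).
- exact: (open_lift_index pN F h pU).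
exact: (open_lift_iota pN pU constF F_cohom).
Qed.

End CentralExtension.
End AbelianCoefficients.

Import Defs.

Theorem proposition1p1 (A G Q : group) (iota : A -> G) (eps : G -> Q) :
  central_extension iota eps -> fin_gen A -> in_class_C Q ->
  forall p : nat, prime p -> top_p_embedded iota p.
Proof.
move=> [iota_hom eps_hom iota_inj eps_surj [ker_eps iota_central]] _ Q_in_C p p_pr N pN.
have A_comm (x y : A) : gmul x y = gmul y x.
  by apply: iota_inj; rewrite !iota_hom iota_central.
exact: (central_top_p_embedded p_pr Q_in_C A_comm iota_hom eps_hom iota_inj eps_surj
  ker_eps iota_central pN).
Qed.
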